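(* Let $\delta>0$, let $(x^\star,u^\star)$ satisfy $f(x^\star)+g(x^\star)u^\star=0$, $g^\star:=g(x^\star)$, $\mathcal{C}:=(g^\star)^\top Q$. Let $K_P,K_I\in\mathbb{R}^{m\times m}$ be symmetric positive definite, $K_D\in\mathbb{R}^{m\times m}$ symmetric positive semidefinite, and $\xi^\star:=-K_I^{-1}u^\star$. Consider the closed-loop discrete-time system, whose solutions are sequences $(x_k,\xi_k,u_k)_{k\in\mathbb{N}}$ satisfying for all $k$ $$x_{k+1}=x_k+\delta f(z_k)+\delta g(z_k)u_k,\quad \xi_{k+1}=\xi_k+\delta\tilde y_k,\quad u_k=-K_P\tilde y_k-\tfrac12K_I(\xi_{k+1}+\xi_k)-\tfrac1\delta K_D\mathcal{C}(x_{k+1}-x_k),$$ where $z_k:=\tfrac12(x_{k+1}+x_k)$, $\tilde y_k:=\mathcal{C}(z_k-x^\star)$. Then: (i) The equilibrium $(x^\star,\xi^\star)$ of the closed loop is globally stable: it is Lyapunov stable and every solution is bounded; more precisely, $V_k:=\frac1\delta\big[\tfrac12(x_k-x^\star)^\top Q(x_k-x^\star)+\tfrac12(\xi_k-\xi^\star)^\top K_I(\xi_k-\xi^\star)+\tfrac12(x_k-x^\star)^\top\mathcal{C}^\top K_D\mathcal{C}(x_k-x^\star)\big]$ satisfies $V_{k+1}-V_k=-(z_k-x^\star)^\top Q\big[R+g^\star K_P(g^\star)^\top\big]Q(z_k-x^\star)\le0$ along every solution. (ii) If moreover there exists $\alpha>0$ with $R+g^\star K_P(g^\star)^\top>\alpha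 I_n$, then every solution satisfies $\lim_{k\to\infty}z_k=x^\star$ (and hence $\lim_{k\to\infty}y_k=(g^\star)^\top Qx^\star$ where $y_k=(g^\star)^\top Qz_k$).
   Context: Power converter model: fix integers $n,m\ge1$, a symmetric positive definite $Q\in\mathbb{R}^{n\times n}$, skew-symmetric $J_0,\dots,J_m\in\mathbb{R}^{n\times n}$, symmetric positive semidefinite $R\in\mathbb{R}^{n\times n}$, matrices $G_0,\dots,G_m\in\mathbb{R}^{n\times n}$, and $E\in\mathbb{R}^n$. Define $f(x):=(J_0-R)Qx+G_0E$ and $g(x)\in\mathbb{R}^{n\times m}$ with $i$-th column $J_iQx+G_iE$. $I_n$ is the $n\times n$ identity; for symmetric matrices $A>B$ means $A-B$ is positive definite. *)

From HB Require Import structures.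
From mathcomp Require Import all_boot all_order all_algebra.
From mathcomp Require Import all_classical all_reals all_analysis.
Set Implicit Arguments. Unset Strict Implicit. Unset Printing Implicit Defensive.
Import Order.TTheory GRing.Theory Num.Theory.
Local Open Scope ring_scope.

Definition qform (R : realType) (n : nat) (A : 'M[R]_n) (v : 'cV[R]_n) : R :=
  (v^T *m A *m v) 0 0.

Definition sym_posdef (R : realType) (n : nat) (A : 'M[R]_n) : Prop :=
  A^T = A /\ forall v : 'cV[R]_n, v != 0 -> 0 < qform A v.
Definition sym_psd (R : realType) (n : nat) (A : 'M[R]_n) : Prop :=
  A^T = A /\ forall v : 'cV[R]_n, 0 <= qform A v.

Definition mx_gt (R : realType) (n : nat) (A B : 'M[R]_n) : Prop :=
  sym_posdef (A - B).

Definition sqnorm (R : realType) (n : nat) (v : 'cV[R]_n) : R :=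
  \sum_(i < n) (v i 0) ^+ 2.

Definition fdrift (R : realType) (n : nat) (J0 Rd Q G0 : 'M[R]_n) (E : 'cV[R]_n)
  (x : 'cV[R]_n) : 'cV[R]_n := (J0 - Rd) *m Q *m x + G0 *m E.

Definition ginput (R : realType) (n m : nat) (J G : 'I_m -> 'M[R]_n) (Q : 'M[R]_n)
  (E : 'cV[R]_n) (x : 'cV[R]_n) : 'M[R]_(n, m) :=
  \matrix_(i < n, j < m) ((J j *m Q *m x + G j *m E) i 0).

Definition midpt (R : realType) (n : nat) (x : nat -> 'cV[R]_n) (k : nat) : 'cV[R]_n :=
  (2%:R)^-1 *: (x k.+1 + x k).

Definition closed_loop_sol (R : realType) (n m : nat)
  (Q J0 Rd G0 : 'M[R]_n) (J G : 'I_m -> 'M[R]_n) (E : 'cV[R]_n)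
  (delta : R) (xs : 'cV[R]_n) (KP KI KD : 'M[R]_m)
  (x : nat -> 'cV[R]_n) (xi u : nat -> 'cV[R]_m) : Prop :=
  let C : 'M[R]_(m, n) := (ginput J G Q E xs)^T *m Q in
  forall k : nat,
    let z := midpt x k in
    let yt := C *m (z - xs) in
    [/\ x k.+1 = x k + delta *: fdrift J0 Rd Q G0 E z
                     + delta *: (ginput J G Q E z *m u k),
        xi k.+1 = xi k + delta *: yt &
        u k = - (KP *m yt) - (2%:R)^-1 *: (KI *m (xi k.+1 + xi k))
              - delta^-1 *: (KD *m C *m (x k.+1 - x k))].

Definition Vlyap (R : realType) (n m : nat)
  (Q : 'M[R]_n) (C : 'M[R]_(m, n)) (KI KD : 'M[R]_m) (delta : R)
  (xs : 'cV[R]_n) (xis : 'cV[R]_m) (x : 'cV[R]_n) (xi : 'cV[R]_m) : R :=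
  delta^-1 * ((2%:R)^-1 * qform Q (x - xs)
              + (2%:R)^-1 * qform KI (xi - xis)
              + (2%:R)^-1 * qform (C^T *m KD *m C) (x - xs)).

From HB Require Import structures.
From mathcomp Require Import all_boot all_order all_algebra.
From mathcomp Require Import all_classical all_reals all_analysis.
From mathcomp Require Import ring lra.
Import Order.TTheory GRing.Theory Num.Theory.
Import numFieldNormedType.Exports.
Local Open Scope classical_set_scope.
Local Open Scope ring_scope.
Set Implicit Arguments. Unset Strict Implicit. Unset Printing Implicit Defensive.

(* The implicit midpoint rule is exact for quadratic energies: the increment of
   [qform A] over a step is twice the pairing, through [A], of the midpoint with
   the step.  Applied to [Vlyap] this turns [V_{k+1} - V_k] into the continuous-time
   power balance evaluated at the midpoint [z_k]: the skew-symmetric parts [J_0],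
   [J_i] contribute nothing, the integral and derivative terms of the PID law cancel
   those of [V], and only [- qform (Q (R + gs KP gs^T) Q) (z_k - xs)] remains.
   As [V] is squeezed between multiples of [|x - xs|^2 + |xi - xis|^2], its
   monotonicity gives stability and boundedness; under strict dissipation the
   decrements [V_k - V_{k+1}], which tend to 0, dominate [|z_k - xs|^2]. *)

Section BilinearForm.
Variable R : realType.

Definition bform p q (A : 'M[R]_(p, q)) (u : 'cV[R]_p) (v : 'cV[R]_q) : R :=
  (u^T *m A *m v) 0 0.

Lemma qformE n (A : 'M[R]_n) v : qform A v = bform A v v. Proof. by []. Qed.

Lemma bformDl p q (A : 'M[R]_(p, q)) u1 u2 v :
  bform A (u1 + u2) v = bform A u1 v + bform A u2 v.
Proof. by rewrite /bform linearD /= !mulmxDl mxE. Qed.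

Lemma bformDr p q (A : 'M[R]_(p, q)) u v1 v2 :
  bform A u (v1 + v2) = bform A u v1 + bform A u v2.
Proof. by rewrite /bform !mulmxDr mxE. Qed.

Lemma bformNl p q (A : 'M[R]_(p, q)) u v : bform A (- u) v = - bform A u v.
Proof. by rewrite /bform linearN /= !mulNmx mxE. Qed.

Lemma bformNr p q (A : 'M[R]_(p, q)) u v : bform A u (- v) = - bform A u v.
Proof. by rewrite /bform !mulmxN mxE. Qed.

Lemma bformBl p q (A : 'M[R]_(p, q)) u1 u2 v :
  bform A (u1 - u2) v = bform A u1 v - bform A u2 v.
Proof. by rewrite bformDl bformNl. Qed.

Lemma bformBr p q (A : 'M[R]_(p, q)) u v1 v2 :
  bform A u (v1 - v2) = bform A u v1 - bform A u v2.
Proof. by rewrite bformDr bformNr. Qed.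

Lemma bformZl p q (A : 'M[R]_(p, q)) a u v : bform A (a *: u) v = a * bform A u v.
Proof. by rewrite /bform linearZ /= -!scalemxAl mxE. Qed.

Lemma bformZr p q (A : 'M[R]_(p, q)) a u v : bform A u (a *: v) = a * bform A u v.
Proof. by rewrite /bform -!scalemxAr mxE. Qed.

Lemma bformDm p q (A B : 'M[R]_(p, q)) u v :
  bform (A + B) u v = bform A u v + bform B u v.
Proof. by rewrite /bform mulmxDr mulmxDl mxE. Qed.

Lemma bformZm p q (A : 'M[R]_(p, q)) a u v : bform (a *: A) u v = a * bform A u v.
Proof. by rewrite /bform -scalemxAr -scalemxAl mxE. Qed.

Lemma bformBm p q (A B : 'M[R]_(p, q)) u v :
  bform (A - B) u v = bform A u v - bform B u v.
Proof. by rewrite bformDm -scaleN1r bformZm mulN1r. Qed.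

Lemma bform_mulmxr p q r (A : 'M[R]_(p, q)) (B : 'M[R]_(q, r)) u v :
  bform A u (B *m v) = bform (A *m B) u v.
Proof. by rewrite /bform !mulmxA. Qed.

Lemma bform_mulmxl p q r (A : 'M[R]_(q, r)) (B : 'M[R]_(q, p)) u v :
  bform A (B *m u) v = bform (B^T *m A) u v.
Proof. by rewrite /bform trmx_mul !mulmxA. Qed.

Lemma bformC p q (A : 'M[R]_(p, q)) u v : bform A u v = bform A^T v u.
Proof.
rewrite /bform -[in LHS](trmxK (u^T *m A *m v)) [in LHS]mxE.
by rewrite !trmx_mul trmxK mulmxA.
Qed.

Lemma qform_skew n (S : 'M[R]_n) w : S^T = - S -> qform S w = 0.
Proof.
move=> hS; have := bformC S w w; rewrite hS -scaleN1r bformZm -qformE => h; lra.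
Qed.

Lemma qformB_midpoint n (A : 'M[R]_n) a b : A^T = A ->
  qform A a - qform A b = 2%:R * bform A ((2%:R)^-1 *: (a + b)) (a - b).
Proof.
move=> hs; rewrite !qformE bformZl bformDl !bformBr (bformC A b a) hs.
by rewrite mulrA mulfV ?pnatr_eq0 // mul1r; ring.
Qed.

Lemma posdef_qform_ge0 n (A : 'M[R]_n) : sym_posdef A -> forall v, 0 <= qform A v.
Proof.
move=> [_ hp] v; have [->|hv] := eqVneq v 0; last exact: ltW (hp v hv).
by rewrite /qform mulmx0 mxE.
Qed.

Lemma posdef_unitmx n (A : 'M[R]_n) : sym_posdef A -> A \in unitmx.
Proof.
move=> [_ hp]; rewrite -row_free_unit -kermx_eq0; apply/eqP/row_matrixP => i.
rewrite row0; apply/eqP/negPn/negP => hu.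
have hker : row i (kermx A) *m A = 0 by rewrite -row_mul mulmx_ker row0.
have := hp (row i (kermx A))^T; rewrite trmx_eq0 => /(_ hu).
by rewrite /qform trmxK hker mul0mx mxE ltxx.
Qed.

Lemma sqnormE n (v : 'cV[R]_n) : sqnorm v = qform 1%:M v.
Proof.
rewrite /qform /sqnorm mulmx1 mxE; apply: eq_bigr => i _.
by rewrite mxE expr2.
Qed.

Lemma sqnorm_ge0 n (v : 'cV[R]_n) : 0 <= sqnorm v.
Proof. by apply: sumr_ge0 => i _; apply: sqr_ge0. Qed.

Lemma sqr_coord_le_sqnorm n (v : 'cV[R]_n) i : v i 0 ^+ 2 <= sqnorm v.
Proof. by rewrite /sqnorm (bigD1 i) //= lerDl sumr_ge0 // => j _; apply: sqr_ge0. Qed.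

Lemma sqnorm_mulmx p q (A : 'M[R]_(p, q)) v : sqnorm (A *m v) = qform (A^T *m A) v.
Proof. by rewrite sqnormE !qformE bform_mulmxl bform_mulmxr mulmx1. Qed.

Lemma qform_conj p q (A : 'M[R]_p) (B : 'M[R]_(p, q)) v :
  qform (B^T *m A *m B) v = qform A (B *m v).
Proof. by rewrite !qformE bform_mulmxl bform_mulmxr. Qed.

Definition mx_abssum n (A : 'M[R]_n) : R := \sum_i \sum_j `|A i j|.

Lemma mx_abssum_ge0 n (A : 'M[R]_n) : 0 <= mx_abssum A.
Proof. by apply: sumr_ge0 => i _; apply: sumr_ge0 => j _. Qed.

Lemma qform_abs_le n (A : 'M[R]_n) v : `|qform A v| <= mx_abssum A * sqnorm v.
Proof.
have -> : qform A v = \sum_i \sum_j (v i 0 * A i j * v j 0).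
  rewrite /qform mxE exchange_big /=; apply: eq_bigr => j _.
  by rewrite mxE big_distrl /=; apply: eq_bigr => i _; rewrite !mxE.
rewrite /mx_abssum big_distrl /=; apply: (le_trans (ler_norm_sum _ _ _)).
apply: ler_sum => i _; rewrite big_distrl /=.
apply: (le_trans (ler_norm_sum _ _ _)); apply: ler_sum => j _.
have hi := sqr_coord_le_sqnorm v i; have hj := sqr_coord_le_sqnorm v j.
have hij : `|v i 0| * `|v j 0| <= sqnorm v.
  by rewrite -normrM ler_norml; apply/andP; split; nra.
rewrite !normrM mulrAC mulrC; exact: ler_wpM2l.
Qed.

Lemma qform_le n (A : 'M[R]_n) v : qform A v <= mx_abssum A * sqnorm v.
Proof. exact: le_trans (ler_norm _) (qform_abs_le _ _). Qed.

Lemma sqnorm_mulmx_le p q (A : 'M[R]_(p, q)) v :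
  sqnorm (A *m v) <= mx_abssum (A^T *m A) * sqnorm v.
Proof. by rewrite sqnorm_mulmx qform_le. Qed.

Lemma mx_gt_scalar_qform n (A : 'M[R]_n) a : mx_gt A a%:M ->
  forall v, a * sqnorm v <= qform A v.
Proof.
move=> hA v; have := posdef_qform_ge0 hA v.
by rewrite qformE bformBm -scalemx1 bformZm sqnormE -!qformE subr_ge0.
Qed.

(* Test [qform A] on [c v - A^-1 v] with [c] large: the cross terms equal [sqnorm v]. *)
Lemma qform_coercive n (A : 'M[R]_n) : A^T = A -> (forall v, 0 <= qform A v) ->
  A \in unitmx -> exists2 K, 0 < K & forall v, sqnorm v <= K * qform A v.
Proof.
move=> hs hp hu; set M := mx_abssum (invmx A)^T.
have hM : 0 <= M := mx_abssum_ge0 _.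
exists ((M + 1) ^+ 2); first by nra.
move=> v; set w := invmx A *m v.
have hvw : bform A v w = sqnorm v by rewrite bform_mulmxr mulmxV // sqnormE.
have hwv : bform A w v = sqnorm v by rewrite bformC hs hvw.
have hww : qform A w <= M * sqnorm v.
  by rewrite qformE bform_mulmxl bform_mulmxr -mulmxA mulmxV // mulmx1 qform_le.
have := hp ((M + 1) *: v - w).
rewrite qformE bformBl !bformBr !bformZl !bformZr hvw hwv -!qformE.
have := sqnorm_ge0 v; nra.
Qed.

Lemma sqnorm_le_mulmx n (A : 'M[R]_n) : A \in unitmx ->
  exists2 K, 0 < K & forall v, sqnorm v <= K * sqnorm (A *m v).
Proof.
move=> hA; have [|||K K0 hK] := @qform_coercive _ (A^T *m A).
- by rewrite trmx_mul trmxK.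
- by move=> v; rewrite -sqnorm_mulmx sqnorm_ge0.
- by rewrite unitmx_mul unitmx_tr hA.
by exists K => // v; rewrite sqnorm_mulmx hK.
Qed.

Lemma cvg_sqnorm_le p (w : nat -> 'cV[R]_p) l (D : nat -> R) c : 0 <= c ->
  D k @[k --> \oo] --> 0 -> (forall k, sqnorm (w k - l) <= c * D k) ->
  w k @[k --> \oo] --> l.
Proof.
move=> c0 hD hw; apply/cvgrPdist_le => e e0.
have e2 : 0 < e ^+ 2 / (c + 1) by rewrite divr_gt0 ?exprn_gt0 //; lra.
move/cvgrPdist_lt : hD => /(_ _ e2); apply: filterS => k hk.
rewrite [leLHS]/Num.Def.normr /= mx_normrE (bigmax_le _ (ltW e0)) //= => -[i j] _.
rewrite /= (ord1 j) -[l - w k]opprB mxE normrN.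
rewrite sub0r normrN ltr_pdivlMr in hk; last by lra.
have := sqr_coord_le_sqnorm (w k - l) i; have := hw k.
have := ler_norm (D k); have := normr_ge0 (D k).
move: hk; set x := (w k - l) i 0; set S := sqnorm _; set d := D k => *.
by rewrite ler_norml; apply/andP; split; nra.
Qed.

End BilinearForm.

Section PortHamiltonian.
Variables (R : realType) (n m : nat).
Variables (Q J0 Rd G0 : 'M[R]_n) (J G : 'I_m -> 'M[R]_n) (E : 'cV[R]_n).
Hypotheses (hQ : Q^T = Q) (hJ0 : J0^T = - J0) (hJ : forall i, (J i)^T = - J i).
Variables (xs : 'cV[R]_n) (us : 'cV[R]_m).
Hypothesis heq : fdrift J0 Rd Q G0 E xs + ginput J G Q E xs *m us = 0.

Local Notation f := (fdrift J0 Rd Q G0 E).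
Local Notation g := (ginput J G Q E).

Lemma ginputB a b : g a - g b = \matrix_(i < n, j < m) ((J j *m Q *m (a - b)) i 0).
Proof. by apply/matrixP => i j; rewrite [RHS]mxE mulmxBr /ginput !mxE; ring. Qed.

Lemma ginputB_orthogonal a b : (a - b)^T *m Q *m (g a - g b) = 0.
Proof.
apply/matrixP => i j; rewrite (ord1 i) [RHS]mxE ginputB.
set M := \matrix_(_, _) _.
have hcol : col j M = J j *m Q *m (a - b).
  by apply/matrixP => k l; rewrite !mxE (ord1 l).
have -> : ((a - b)^T *m Q *m M) 0 j = qform (Q *m J j *m Q) (a - b).
  transitivity (col j ((a - b)^T *m Q *m M) 0 0); first by rewrite [RHS]mxE.
  by rewrite colE -mulmxA -colE hcol /qform !mulmxA.
by apply: qform_skew; rewrite !trmx_mul hQ hJ mulNmx mulmxN mulmxA.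
Qed.

Lemma field_at_equilibrium z u :
  f z + g z *m u = (J0 - Rd) *m Q *m (z - xs) + (g z - g xs) *m u + g xs *m (u - us).
Proof.
rewrite -[LHS]subr0 -heq /fdrift.
move: ((J0 - Rd) *m Q) (G0 *m E) (g z) (g xs) => A c gz g0.
rewrite !mulmxBr mulmxBl.
move: (A *m z) (A *m xs) (gz *m u) (g0 *m u) (g0 *m us) => a b p q r.
by apply/matrixP => i j; rewrite !mxE; ring.
Qed.

Lemma power_balance z u :
  bform Q (z - xs) (f z + g z *m u)
  = - qform (Q *m Rd *m Q) (z - xs) + bform 1%:M ((g xs)^T *m Q *m (z - xs)) (u - us).
Proof.
rewrite field_at_equilibrium !(bformDr Q).
have -> : bform Q (z - xs) ((g z - g xs) *m u) = 0.
  by rewrite /bform mulmxA ginputB_orthogonal mul0mx mxE.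
rewrite addr0 bform_mulmxr mulmxA mulmxBr mulmxBl bformBm -!qformE.
rewrite qform_skew ?sub0r; last by rewrite !trmx_mul hQ hJ0 mulNmx mulmxN mulmxA.
by rewrite bform_mulmxl bform_mulmxr trmx_mul trmxK hQ mulmx1.
Qed.

Variables (KP KI KD : 'M[R]_m) (delta : R).
Hypotheses (hKI : KI^T = KI) (hKIu : KI \in unitmx) (hKD : KD^T = KD).
Hypothesis hdelta : delta != 0.

Local Notation gs := (g xs).
Local Notation C := ((g xs)^T *m Q).
Local Notation xis := (- (invmx KI *m us)).
Local Notation V := (Vlyap Q C KI KD delta xs xis).

Lemma qform_dissipation w :
  qform (Q *m (Rd + gs *m KP *m gs^T) *m Q) w = qform (Q *m Rd *m Q) w + qform KP (C *m w).
Proof.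
rewrite mulmxDr mulmxDl qformE bformDm -!qformE -qform_conj.
by rewrite trmx_mul trmxK hQ !mulmxA.
Qed.

Lemma Vlyap_step x0 x1 xi0 xi1 u :
  let z := (2%:R)^-1 *: (x1 + x0) in
  let yt := C *m (z - xs) in
  x1 = x0 + delta *: f z + delta *: (g z *m u) ->
  xi1 = xi0 + delta *: yt ->
  u = - (KP *m yt) - (2%:R)^-1 *: (KI *m (xi1 + xi0)) - delta^-1 *: (KD *m C *m (x1 - x0)) ->
  V x1 xi1 - V x0 xi0 = - qform (Q *m (Rd + gs *m KP *m gs^T) *m Q) (z - xs).
Proof.
move=> z yt hx hxi hu.
have midB p (a b c : 'cV[R]_p) : (2%:R)^-1 *: ((a - c) + (b - c)) = (2%:R)^-1 *: (a + b) - c.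
  by apply/matrixP => i j; rewrite !mxE; field.
have hdx : (x1 - xs) - (x0 - xs) = delta *: (f z + g z *m u).
  by rewrite hx; apply/matrixP => i j; rewrite !mxE; ring.
have hdxi : (xi1 - xis) - (xi0 - xis) = delta *: yt.
  by rewrite hxi; apply/matrixP => i j; rewrite !mxE; ring.
have hCKC : (C^T *m KD *m C)^T = C^T *m KD *m C by rewrite !trmx_mul !trmxK hKD !mulmxA.
have -> : V x1 xi1 - V x0 xi0 = delta^-1 * ((2%:R)^-1 * (qform Q (x1 - xs) - qform Q (x0 - xs))
     + (2%:R)^-1 * (qform KI (xi1 - xis) - qform KI (xi0 - xis))
     + (2%:R)^-1 * (qform (C^T *m KD *m C) (x1 - xs) - qform (C^T *m KD *m C) (x0 - xs))).
  by rewrite /Vlyap; ring.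
have dxE : (x1 - xs) - (x0 - xs) = x1 - x0 by rewrite opprB addrA subrK.
rewrite !qformB_midpoint // !midB -/z hdxi dxE.
have -> : bform Q (z - xs) (x1 - x0)
    = delta * (- qform (Q *m Rd *m Q) (z - xs) + bform 1%:M yt (u - us)).
  by rewrite -dxE hdx bformZr power_balance.
have -> : bform (C^T *m KD *m C) (z - xs) (x1 - x0) = bform (KD *m C) yt (x1 - x0).
  by rewrite bform_mulmxl -!mulmxA.
have -> : bform KI ((2%:R)^-1 *: (xi1 + xi0) - xis) (delta *: yt)
    = delta * ((2%:R)^-1 * bform KI yt (xi1 + xi0) + bform 1%:M yt us).
  rewrite bformZr [bform KI _ _]bformC hKI bformBr bformNr bformZr.
  by rewrite bform_mulmxr mulmxV //; ring.
have -> : bform 1%:M yt (u - us) = - qform KP yt - (2%:R)^-1 * bform KI yt (xi1 + xi0)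
    - delta^-1 * bform (KD *m C) yt (x1 - x0) - bform 1%:M yt us.
  rewrite hu; clearbody yt; move: (x1 - x0) => D.
  by rewrite !bformBr !bformNr !bformZr !bform_mulmxr !mul1mx.
by rewrite qform_dissipation -/yt; field.
Qed.

End PortHamiltonian.

Lemma cvg_nonincreasing_decrement (R : realType) (v : nat -> R) :
  (forall k, v k.+1 <= v k) -> (forall k, 0 <= v k) ->
  v k - v k.+1 @[k --> \oo] --> 0.
Proof.
move=> hv hv0.
have hlim : v k @[k --> \oo] --> inf (range v).
  apply: nonincreasing_cvgn; first exact/nonincreasing_seqP.
  by exists 0 => _ [k _ <-].
have hlimS : v k.+1 @[k --> \oo] --> inf (range v) by rewrite cvg_shiftS.
by have := cvgB hlim hlimS; rewrite subrr; apply.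
Qed.

Section LyapunovBounds.
Variables (R : realType) (n m : nat).
Variables (Q : 'M[R]_n) (C : 'M[R]_(m, n)) (KI KD : 'M[R]_m) (delta : R).
Variables (xs : 'cV[R]_n) (xis : 'cV[R]_m).
Hypotheses (hQ : sym_posdef Q) (hKI : sym_posdef KI) (hKD : sym_psd KD).
Hypothesis hdelta : 0 < delta.

Local Notation V := (Vlyap Q C KI KD delta xs xis).

Lemma qform_conj_ge0 v : 0 <= qform (C^T *m KD *m C) v.
Proof. by rewrite qform_conj; apply: hKD.2. Qed.

Lemma Vlyap_coercive : exists2 L, 0 < L &
  forall a b, sqnorm (a - xs) + sqnorm (b - xis) <= L * V a b.
Proof.
have [KQ KQ0 hKQ] := qform_coercive hQ.1 (posdef_qform_ge0 hQ) (posdef_unitmx hQ).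
have [KK KK0 hKK] := qform_coercive hKI.1 (posdef_qform_ge0 hKI) (posdef_unitmx hKI).
exists (2%:R * delta * (KQ + KK)); first by rewrite !mulr_gt0 ?addr_gt0.
move=> a b; have := qform_conj_ge0 (a - xs).
have := posdef_qform_ge0 hQ (a - xs); have := posdef_qform_ge0 hKI (b - xis).
have := hKQ (a - xs); have := hKK (b - xis).
have -> : 2%:R * delta * (KQ + KK) * V a b = (KQ + KK) *
    (qform Q (a - xs) + qform KI (b - xis) + qform (C^T *m KD *m C) (a - xs)).
  by rewrite /Vlyap; field; rewrite gt_eqF.
nra.
Qed.

Lemma Vlyap_ge0 a b : 0 <= V a b.
Proof.
have [L L0 hL] := Vlyap_coercive; have := hL a b.
have := addr_ge0 (sqnorm_ge0 (a - xs)) (sqnorm_ge0 (b - xis)); nra.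
Qed.

Lemma Vlyap_bounded : exists2 U, 0 <= U &
  forall a b, V a b <= U * (sqnorm (a - xs) + sqnorm (b - xis)).
Proof.
exists (delta^-1 * (mx_abssum Q + mx_abssum KI + mx_abssum (C^T *m KD *m C))).
  by rewrite mulr_ge0 ?invr_ge0 ?(ltW hdelta) // !addr_ge0 ?mx_abssum_ge0.
move=> a b; rewrite /Vlyap -mulrA ler_pM2l ?invr_gt0 //.
have := qform_le Q (a - xs); have := qform_le KI (b - xis); have := qform_le (C^T *m KD *m C) (a - xs).
have := posdef_qform_ge0 hQ (a - xs); have := posdef_qform_ge0 hKI (b - xis).
have := qform_conj_ge0 (a - xs).
have := mulr_ge0 (mx_abssum_ge0 Q) (sqnorm_ge0 (b - xis)).
have := mulr_ge0 (mx_abssum_ge0 KI) (sqnorm_ge0 (a - xs)).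
have := mulr_ge0 (mx_abssum_ge0 (C^T *m KD *m C)) (sqnorm_ge0 (b - xis)).
nra.
Qed.

End LyapunovBounds.

Section ClosedLoop.
Variables (R : realType) (n m : nat).
Variables (Q J0 Rd G0 : 'M[R]_n) (J G : 'I_m -> 'M[R]_n) (E : 'cV[R]_n).
Hypotheses (hQ : sym_posdef Q) (hJ0 : J0^T = - J0) (hJ : forall i, (J i)^T = - J i).
Hypothesis hR : sym_psd Rd.
Variables (delta : R) (xs : 'cV[R]_n) (us : 'cV[R]_m).
Hypothesis hdelta : 0 < delta.
Hypothesis heq : fdrift J0 Rd Q G0 E xs + ginput J G Q E xs *m us = 0.
Variables (KP KI KD : 'M[R]_m).
Hypotheses (hKP : sym_posdef KP) (hKI : sym_posdef KI) (hKD : sym_psd KD).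

Local Notation gs := (ginput J G Q E xs).
Local Notation C := (gs^T *m Q).
Local Notation xis := (- (invmx KI *m us)).
Local Notation sol := (closed_loop_sol Q J0 Rd G0 J G E delta xs KP KI KD).
Local Notation V := (Vlyap Q C KI KD delta xs xis).
Local Notation M := (Rd + gs *m KP *m gs^T).

Lemma dissipation_psd w : 0 <= qform (Q *m M *m Q) w.
Proof.
have -> : Q *m M *m Q = Q^T *m M *m Q by rewrite hQ.1.
rewrite qform_conj qformE bformDm -!qformE addr_ge0 //; first exact: hR.2.
by rewrite -[X in X *m KP]trmxK qform_conj posdef_qform_ge0.
Qed.

Lemma closed_loop_dissipation x xi u : sol x xi u -> forall k,
  V (x k.+1) (xi k.+1) - V (x k) (xi k) = - qform (Q *m M *m Q) (midpt x k - xs).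
Proof.
move=> hs k; have [hx hxi hu] := hs k.
exact (Vlyap_step hQ.1 hJ0 hJ heq hKI.1 (posdef_unitmx hKI) hKD.1 (lt0r_neq0 hdelta) hx hxi hu).
Qed.

Lemma closed_loop_Vlyap_le x xi u : sol x xi u -> forall k,
  V (x k.+1) (xi k.+1) <= V (x k) (xi k).
Proof.
by move=> hs k; rewrite -subr_le0 (closed_loop_dissipation hs) oppr_le0 dissipation_psd.
Qed.

Lemma closed_loop_bounded : exists2 K, 0 <= K & forall x xi u, sol x xi u ->
  forall k, sqnorm (x k - xs) + sqnorm (xi k - xis)
            <= K * (sqnorm (x 0%N - xs) + sqnorm (xi 0%N - xis)).
Proof.
have [L L0 hL] := Vlyap_coercive C xs xis hQ hKI hKD hdelta.
have [U U0 hU] := Vlyap_bounded C xs xis hQ hKI hKD hdelta.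
exists (L * U); first by rewrite mulr_ge0 // ltW.
move=> x xi u hs k; apply: le_trans (hL _ _) _; rewrite -mulrA ler_pM2l //.
apply: le_trans (hU _ _); elim: k => [|k ih] //.
exact: le_trans (closed_loop_Vlyap_le hs k) ih.
Qed.

Lemma closed_loop_decrement_cvg0 x xi u : sol x xi u ->
  V (x k) (xi k) - V (x k.+1) (xi k.+1) @[k --> \oo] --> 0.
Proof.
move=> hs; apply: (cvg_nonincreasing_decrement (v := fun k => V (x k) (xi k))) => k.
  exact: closed_loop_Vlyap_le hs k.
exact (Vlyap_ge0 C xs xis hQ hKI hKD hdelta (x k) (xi k)).
Qed.

Lemma closed_loop_midpt_le alpha : 0 < alpha -> mx_gt M alpha%:M ->
  exists2 c, 0 <= c & forall x xi u, sol x xi u -> forall k,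
    sqnorm (midpt x k - xs) <= c * (V (x k) (xi k) - V (x k.+1) (xi k.+1)).
Proof.
move=> ha hM; have [K K0 hK] := sqnorm_le_mulmx (posdef_unitmx hQ).
exists (K / alpha); first by rewrite divr_ge0 // ltW.
move=> x xi u hs k; set w := midpt x k - xs.
have -> : V (x k) (xi k) - V (x k.+1) (xi k.+1) = qform M (Q *m w).
  by rewrite -[LHS]opprB (closed_loop_dissipation hs) opprK -qform_conj hQ.1.
rewrite mulrAC ler_pdivlMr //.
have := hK w; have := mx_gt_scalar_qform hM (Q *m w); have := ltW ha; have := ltW K0.
nra.
Qed.

End ClosedLoop.

Theorem proposition4 (R : realType) (n m : nat) (hn : (0 < n)%N) (hm : (0 < m)%N)
  (Q J0 Rd G0 : 'M[R]_n) (J G : 'I_m -> 'M[R]_n) (E : 'cV[R]_n)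
  (hQ : sym_posdef Q)
  (hJ0 : J0^T = - J0) (hJ : forall i, (J i)^T = - J i)
  (hR : sym_psd Rd)
  (delta : R) (hdelta : 0 < delta)
  (xs : 'cV[R]_n) (us : 'cV[R]_m)
  (heq : fdrift J0 Rd Q G0 E xs + ginput J G Q E xs *m us = 0)
  (KP KI KD : 'M[R]_m)
  (hKP : sym_posdef KP) (hKI : sym_posdef KI) (hKD : sym_psd KD) :
  let gs := ginput J G Q E xs in
  let C := gs^T *m Q in
  let xis := - (invmx KI *m us) in
  let sol := closed_loop_sol Q J0 Rd G0 J G E delta xs KP KI KD in
  let V := Vlyap Q C KI KD delta xs xis in
  (forall x xi u, sol x xi u -> forall k : nat,
      V (x k.+1) (xi k.+1) - V (x k) (xi k)
        = - qform (Q *m (Rd + gs *m KP *m gs^T) *m Q) (midpt x k - xs)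
      /\ V (x k.+1) (xi k.+1) - V (x k) (xi k) <= 0)
  /\ (forall eps : R, 0 < eps -> exists d : R, 0 < d /\
        forall x xi u, sol x xi u ->
          sqnorm (x 0%N - xs) + sqnorm (xi 0%N - xis) < d ->
          forall k : nat, sqnorm (x k - xs) + sqnorm (xi k - xis) < eps)
  /\ (forall x xi u, sol x xi u -> exists B : R,
        forall k : nat, sqnorm (x k - xs) + sqnorm (xi k - xis) <= B)
  /\ ((exists alpha : R, 0 < alpha /\ mx_gt (Rd + gs *m KP *m gs^T) (alpha%:M)) ->
      forall x xi u, sol x xi u ->
        (midpt x k @[k --> \oo] --> xs)
        /\ ((gs^T *m Q *m midpt x k) @[k --> \oo] --> gs^T *m Q *m xs)).
Proof.
move=> gs C xis sol V.
have [K K0 hK] := closed_loop_bounded hQ hJ0 hJ hR hdelta heq hKP hKI hKD.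
split; [|split; [|split]].
- move=> x xi u hs k; rewrite (closed_loop_dissipation hQ hJ0 hJ hdelta heq hKI hKD hs).
  split => //.
  by rewrite oppr_le0 (dissipation_psd _ _ _ hQ hR _ hKP).
- move=> eps e0; exists (eps / (K + 1)); split; first by rewrite divr_gt0 // ltr_wpDl.
  move=> x xi u hs h0 k; apply: le_lt_trans (hK _ _ _ hs k) _.
  move: h0; rewrite ltr_pdivlMr ?ltr_wpDl //.
  have := addr_ge0 (sqnorm_ge0 (x 0%N - xs)) (sqnorm_ge0 (xi 0%N - xis)); nra.
- by move=> x xi u hs; eexists; exact: hK.
move=> [alpha [ha hM]] x xi u hs.
have [c c0 hc] := closed_loop_midpt_le hQ hJ0 hJ hdelta heq hKI hKD ha hM.
have hD := closed_loop_decrement_cvg0 hQ hJ0 hJ hR hdelta heq hKP hKI hKD hs.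
split; first exact: cvg_sqnorm_le c0 hD (hc _ _ _ hs).
apply: (cvg_sqnorm_le (c := mx_abssum (C^T *m C) * c) _ hD).
  by rewrite mulr_ge0 ?mx_abssum_ge0.
move=> k; rewrite -mulmxBr -mulrA; apply: le_trans (sqnorm_mulmx_le _ _) _.
apply: ler_wpM2l; [exact: mx_abssum_ge0 | exact: hc].
Qed.
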